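(* Let $A$ be a uniform algebra on a compact space $X$, let $x_0\in X$, and let $\phi$ be a selfmap of $X$ which induces an endomorphism $T$ of $A$ (i.e. $f\circ\phi\in A$ and $Tf=f\circ\phi$ for all $f\in A$). Let $\phi_n$ be the $n$-th iterate of $\phi$ and set $C_n=\sup\{\|\phi_n(x)-x_0\|: x\in X\}$. If $C_n^{1/n}\to0$ as $n\to\infty$, then $T$ is a Riesz operator.
   Context: A uniform algebra on a compact space $X$ is a closed subalgebra of $C(X)$, with the supremum norm, containing the constants and separating points. For $x,y\in X$, the norm (Gleason) distance is $\|x-y\|=\sup\{|f(x)-f(y)|: f\in A,\ \|f\|_\infty\le1\}$, i.e. the norm in $A^*$ of the difference of the evaluation functionals. A bounded operator $T$ is a Riesz operator if $\lim_{n}\left[\inf\{\|T^n-K\|:K \text{ compact}\}\right]^{1/n}=0$. *)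

From HB Require Import structures.
From mathcomp Require Import all_boot all_order all_algebra.
From mathcomp Require Import all_classical all_reals all_analysis.
From mathcomp Require Import complex.

Set Implicit Arguments.
Unset Strict Implicit.
Unset Printing Implicit Defensive.

Import Order.TTheory GRing.Theory Num.Theory numFieldNormedType.Exports.
Local Open Scope classical_set_scope.
Local Open Scope ring_scope.

Section UniformAlgebras.
Variables (R : realType) (X : topologicalType).
Local Notation C := (R[i]).
Local Notation fn := (X -> C).

Definition cabs (z : C) : R := ComplexField.Normc.normc z.

Definition supn (f : fn) : R := sup (range (fun x => cabs (f x))).

(* continuity of a complex-valued function (C = R^2 with product topology) *)
Definition ccontinuous (f : fn) : Prop :=
  continuous (fun x => complex.Re (f x)) /\ continuous (fun x => complex.Im (f x)).

Definition unif_lim (u : nat -> fn) (g : fn) : Prop :=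
  forall e : R, 0 < e -> exists N : nat, forall n, (N <= n)%N ->
    forall x, cabs (u n x - g x) < e.

Definition uniform_algebra (A : set fn) : Prop :=
  (forall f, A f -> ccontinuous f) /\
  (forall c : C, A (fun _ => c)) /\
  (forall f g, A f -> A g -> A (fun x => f x + g x)) /\
  (forall f g, A f -> A g -> A (fun x => f x * g x)) /\
  (forall (c : C) f, A f -> A (fun x => c * f x)) /\
  (forall (u : nat -> fn) g, (forall n, A (u n)) -> unif_lim u g -> A g) /\
  (forall x y : X, x <> y -> exists f, A f /\ f x <> f y).

Definition ball1 (A : set fn) : set fn := [set f | A f /\ supn f <= 1].

(* Gleason (norm) distance ||x - y|| in A^* *)
Definition gdist (A : set fn) (x y : X) : R :=
  sup [set cabs (f x - f y) | f in ball1 A].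

Definition op_on (A : set fn) (S : fn -> fn) : Prop :=
  (forall f, A f -> A (S f)) /\
  (forall (c : C) f g, A f -> A g ->
     S (fun x => c * f x + g x) = (fun x => c * S f x + S g x)).

Definition op_norm (A : set fn) (S : fn -> fn) : R :=
  sup [set supn (S f) | f in ball1 A].

Definition compact_op (A : set fn) (K : fn -> fn) : Prop :=
  op_on A K /\
  forall u : nat -> fn, (forall n, ball1 A (u n)) ->
    exists (s : nat -> nat) (g : fn),
      (forall n, (s n < s n.+1)%N) /\ A g /\ unif_lim (fun n => K (u (s n))) g.

Definition ess_norm (A : set fn) (S : fn -> fn) : R :=
  inf [set op_norm A (fun f x => S f x - K f x) | K in compact_op A].

Definition riesz_op (A : set fn) (S : fn -> fn) : Prop :=
  (fun n : nat => ess_norm A (iter n S) `^ (n%:R^-1)) @ \oo --> (0 : R).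

End UniformAlgebras.

From mathcomp Require Import all_boot all_order all_algebra.
From mathcomp Require Import all_classical all_reals all_analysis.
From mathcomp Require Import complex.
Import Order.TTheory GRing.Theory Num.Theory numFieldNormedType.Exports.
Local Open Scope classical_set_scope.
Local Open Scope ring_scope.

(* The operator K f := (the constant f x0) is compact: its range is the constants, and f x0
   stays in the closed unit disc when f runs over the unit ball.  For such f,
   (T^n f - K f)(x) = f (phi_n x) - f x0 has modulus at most the Gleason distance
   ||phi_n x - x0||, so the essential norm of T^n is at most C_n, and the n-th roots are
   squeezed to 0. *)

Section SupInfNonneg.
Variables (R : realType) (E : set R).

Lemma sup_ge0 : lbound E 0 -> 0 <= sup E.
Proof.
move=> E_ge0; have [E_ub|E_nub] := pselect (has_ubound E); last first.
  by rewrite sup_out // => -[_ /E_nub].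
have [[e Ee]|/nonemptyPn ->] := pselect (E !=set0); last by rewrite sup0.
exact: le_trans (E_ge0 e Ee) (ub_le_sup E_ub Ee).
Qed.

Lemma sup_le_ge0 c : 0 <= c -> ubound E c -> sup E <= c.
Proof.
move=> c_ge0 Ec; have [/ge_sup-> //|/nonemptyPn ->] := pselect (E !=set0).
by rewrite sup0.
Qed.

Lemma inf_ge0 : lbound E 0 -> 0 <= inf E.
Proof.
move=> E_ge0; have [/lb_le_inf-> //|/nonemptyPn ->] := pselect (E !=set0).
by rewrite inf0.
Qed.

End SupInfNonneg.

Lemma increasing_seq_cvgn {s : nat -> nat} : increasing_seq s -> s @ \oo --> \oo.
Proof.
move=> /increasing_seqP s_lt; have id_le_s n : (n <= s n)%N.
  by elim: n => // n IH; exact: leq_ltn_trans IH (s_lt n).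
apply/cvgnyPge => N; near=> n.
apply: (leq_trans _ (id_le_s n)); near: n; exact: nbhs_infty_ge.
Unshelve. all: end_near.
Qed.

Section ComplexModulus.
Context {R : realType}.
Implicit Types z w : R[i].

Lemma cabs0 : cabs (0 : R[i]) = 0.
Proof. exact: ComplexField.Normc.normc0. Qed.

Lemma cabs_ge0 z : 0 <= cabs z.
Proof. by case: z => a b; rewrite /cabs /= sqrtr_ge0. Qed.

Lemma cabs_subr_le z w : cabs (z - w) <= cabs z + cabs w.
Proof. by rewrite /cabs (le_trans (le_normcD _ _)) // normcN. Qed.

Lemma cabs_Re_le z : `|complex.Re z| <= cabs z.
Proof.
case: z => a b; rewrite /cabs /= -sqrtr_sqr ler_sqrt ?addr_ge0 ?sqr_ge0 //.
by rewrite lerDl sqr_ge0.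
Qed.

Lemma cabs_Im_le z : `|complex.Im z| <= cabs z.
Proof.
case: z => a b; rewrite /cabs /= -sqrtr_sqr ler_sqrt ?addr_ge0 ?sqr_ge0 //.
by rewrite lerDr sqr_ge0.
Qed.

Lemma cabs_le_Re_Im z : cabs z <= `|complex.Re z| + `|complex.Im z|.
Proof.
case: z => a b; rewrite /cabs /= -[X in _ <= X]ger0_norm ?addr_ge0 // -sqrtr_sqr.
rewrite ler_sqrt ?sqr_ge0 // sqrrD !real_normK ?num_real //.
by rewrite lerD2r lerDl mulrn_wge0 // mulr_ge0.
Qed.

Lemma cabs_bolzano_weierstrass (z : nat -> R[i]) (M : R) :
  (forall n, cabs (z n) <= M) ->
  exists2 s : nat -> nat, increasing_seq s &
    exists l, forall e, 0 < e -> \forall n \near \oo, cabs (z (s n) - l) < e.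
Proof.
move=> z_le.
have bounded_coord (p : R[i] -> R) (s : nat -> nat) :
    (forall w, `|p w| <= cabs w) -> bounded_fun (fun n => p (z (s n))).
  move=> p_le; rewrite /bounded_near; near=> K => n _ /=.
  apply: le_trans (p_le _) (le_trans (z_le _) _); near: K.
  by apply: nbhs_pinfty_ge; exact: num_real.
have [s1 s1_incr /cvg_ex[a Re_to_a]] := bolzano_weierstrass
  (bounded_coord _ id cabs_Re_le).
have [s2 s2_incr /cvg_ex[b Im_to_b]] := bolzano_weierstrass
  (bounded_coord _ s1 cabs_Im_le).
have Re_sub_to_a := cvg_comp _ _ (increasing_seq_cvgn s2_incr) Re_to_a.
exists (s1 \o s2); first by move=> m n /=; rewrite s1_incr; exact: s2_incr.
exists (Complex a b) => e e_gt0.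
have e2_gt0 : 0 < e / 2 by rewrite divr_gt0.
move/cvgrPdist_lt: Re_sub_to_a => /(_ _ e2_gt0) Re_near.
move/cvgrPdist_lt: Im_to_b => /(_ _ e2_gt0) Im_near.
near=> n.
have Re_n : `|a - complex.Re (z (s1 (s2 n)))| < e / 2 by near: n.
have Im_n : `|b - complex.Im (z (s1 (s2 n)))| < e / 2 by near: n.
move: Re_n Im_n; case: (z (s1 (s2 n))) => p q /= Re_n Im_n.
apply: le_lt_trans (cabs_le_Re_Im (Complex (p - a) (q - b))) _.
by rewrite (splitr e) ltrD // distrC.
Unshelve. all: end_near.
Qed.

End ComplexModulus.

Lemma compact_continuous_bounded {R : realType} {X : topologicalType} (g : X -> R) :
  compact [set: X] -> continuous g -> exists M, forall x, `|g x| <= M.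
Proof.
move=> X_compact g_cont.
have g_img_compact : compact (g @` setT).
  by apply: continuous_compact => //; exact: continuous_subspaceT.
have := compact_bounded g_img_compact.
rewrite /bounded_set /bounded_near => /filter_ex[M M_bnd].
by exists M => x; apply: M_bnd; exists x.
Qed.

Section Operators.
Context {R : realType} {X : topologicalType} {A : set (X -> R[i])}.
Implicit Types S K : (X -> R[i]) -> (X -> R[i]).

Lemma op_norm_ge0 S : 0 <= op_norm A S.
Proof.
apply: sup_ge0 => _ [f _ <-]; apply: sup_ge0 => _ [x _ <-]; exact: cabs_ge0.
Qed.

Lemma op_norm_le S c : 0 <= c ->
  (forall f x, ball1 A f -> cabs (S f x) <= c) -> op_norm A S <= c.
Proof.
move=> c_ge0 Sc; apply: sup_le_ge0 => // _ [f f_ball <-].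
by apply: sup_le_ge0 => // _ [x _ <-]; exact: Sc.
Qed.

Lemma ess_norm_ge0 S : 0 <= ess_norm A S.
Proof. by apply: inf_ge0 => _ [K _ <-]; exact: op_norm_ge0. Qed.

Lemma ess_norm_le S K : compact_op A K ->
  ess_norm A S <= op_norm A (fun f x => S f x - K f x).
Proof.
move=> K_compact; apply: ge_inf; last by exists K.
by exists 0 => _ [K' _ <-]; exact: op_norm_ge0.
Qed.

Lemma riesz_op_of_ess_norm_le {S} {c : nat -> R} :
  (fun n => c n `^ n%:R^-1) @ \oo --> 0 ->
  (forall n, ess_norm A (iter n S) <= c n) -> riesz_op A S.
Proof.
move=> c_root ess_le_c; apply: (squeeze_cvgr _ (cvg_cst 0) c_root).
near=> n; have ess_ge0 := ess_norm_ge0 (iter n S).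
by rewrite powR_ge0 /= ge0_ler_powR ?invr_ge0 ?nnegrE // (le_trans ess_ge0).
Unshelve. all: end_near.
Qed.

End Operators.

Section UniformAlgebra.
Variables (R : realType) (X : topologicalType) (A : set (X -> R[i])).
Hypotheses (X_compact : compact [set: X]) (A_unif : uniform_algebra A).

Lemma uniform_algebra_bounded f : A f -> exists M, forall x, cabs (f x) <= M.
Proof.
have [A_cont _] := A_unif; move=> /A_cont[Re_cont Im_cont].
have [M1 M1_bnd] := compact_continuous_bounded _ X_compact Re_cont.
have [M2 M2_bnd] := compact_continuous_bounded _ X_compact Im_cont.
exists (M1 + M2) => x.
exact: le_trans (cabs_le_Re_Im _) (lerD (M1_bnd x) (M2_bnd x)).
Qed.

Lemma ball1_le1 f x : ball1 A f -> cabs (f x) <= 1.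
Proof.
move=> [Af f_le1]; have [M M_bnd] := uniform_algebra_bounded _ Af.
apply: le_trans f_le1; apply: ub_le_sup; last by exists x.
by exists M => _ [y _ <-].
Qed.

Lemma ball1_cst0 : ball1 A (fun=> 0).
Proof.
have [_ [A_cst _]] := A_unif; split; first exact: A_cst.
by apply: sup_le_ge0 => // _ [x _ <-]; rewrite cabs0.
Qed.

Lemma ball1_dist_le2 f x y : ball1 A f -> cabs (f x - f y) <= 2.
Proof.
move=> f_ball; apply: le_trans (cabs_subr_le _ _) _.
by rewrite -[2]/(1 + 1); apply: lerD; exact: ball1_le1.
Qed.

Lemma gdist_ge f x y : ball1 A f -> cabs (f x - f y) <= gdist A x y.
Proof.
move=> f_ball; apply: ub_le_sup; last by exists f.
by exists 2 => _ [g g_ball <-]; exact: ball1_dist_le2.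
Qed.

Lemma gdist_ge0 x y : 0 <= gdist A x y.
Proof. by have := gdist_ge _ x y ball1_cst0; rewrite subrr cabs0. Qed.

Lemma gdist_le2 x y : gdist A x y <= 2.
Proof.
by apply: sup_le_ge0 => // _ [f f_ball <-]; exact: ball1_dist_le2.
Qed.

Lemma compact_op_eval x0 : compact_op A (fun f _ => f x0).
Proof.
have [_ [A_cst _]] := A_unif.
split; first by split => [f _|c f g _ _] //; exact: A_cst.
move=> u u_ball.
have [s s_incr [l l_lim]] := @cabs_bolzano_weierstrass _ (fun n => u n x0) 1
  (fun n => ball1_le1 _ x0 (u_ball n)).
exists s, (fun _ => l); split; first by move/increasing_seqP: s_incr.
split; first exact: A_cst.
by move=> e /l_lim[N _ N_le]; exists N => n Nn _; exact: N_le.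
Qed.

Section CompositionOperator.
Variables (phi : X -> X) (T : (X -> R[i]) -> (X -> R[i])).
Hypotheses (A_phi : forall f, A f -> A (f \o phi))
  (T_phi : forall f, A f -> T f = f \o phi).

Lemma comp_iter_mem n f : A f -> A (f \o iter n phi).
Proof.
move=> Af; elim: n => [//|n IH].
by have := A_phi _ IH; congr A; apply/funext => x /=; rewrite -iterSr.
Qed.

Lemma iter_comp_op n f : A f -> iter n T f = f \o iter n phi.
Proof.
move=> Af; elim: n => [//|n IH] /=.
rewrite IH T_phi; last exact: comp_iter_mem.
by apply/funext => x /=; rewrite -iterSr.
Qed.

Lemma ess_norm_iter_le x0 n :
  ess_norm A (iter n T) <= sup [set gdist A (iter n phi x) x0 | x in [set: X]].
Proof.
have gdist_le_sup x : gdist A (iter n phi x) x0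
    <= sup [set gdist A (iter n phi x) x0 | x in [set: X]].
  apply: ub_le_sup; last by exists x.
  by exists 2 => _ [y _ <-]; exact: gdist_le2.
apply: le_trans (ess_norm_le _ _ (compact_op_eval x0)) _.
apply: op_norm_le => [|f x f_ball].
  exact: le_trans (gdist_ge0 _ _) (gdist_le_sup x0).
rewrite iter_comp_op; last by case: f_ball.
exact: le_trans (gdist_ge f _ _ f_ball) (gdist_le_sup x).
Qed.

End CompositionOperator.

End UniformAlgebra.

Theorem lemma4p1 (R : realType) (X : topologicalType)
  (A : set (X -> R[i])) (x0 : X) (phi : X -> X)
  (T : (X -> R[i]) -> (X -> R[i])) :
  compact [set: X] -> hausdorff_space X ->
  uniform_algebra A ->
  (forall f, A f -> A (f \o phi)) ->
  (forall f, A f -> T f = f \o phi) ->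
  (fun n : nat =>
     (sup [set gdist A (iter n phi x) x0 | x in [set: X]]) `^ (n%:R^-1))
    @ \oo --> (0 : R) ->
  riesz_op A T.
Proof.
move=> X_compact _ A_unif A_phi T_phi C_root.
apply: (riesz_op_of_ess_norm_le C_root) => n.
exact: ess_norm_iter_le.
Qed.
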